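(* Let $G$ be a locally generalized radical group and let $A$ be a minimax-antifinitary $\mathbb{Z}G$-module. Suppose that $G \neq \mathbf{Coc}_{\mathbb{Z}\text{-mmx}}(G)$, $G$ is not finitely generated, and $G/\mathbf{Coc}_{\mathbb{Z}\text{-mmx}}(G)$ is finitely generated. Let $g \in G$ be such that $G = \langle g\rangle \mathbf{Coc}_{\mathbb{Z}\text{-mmx}}(G)$. If $H$ is a normal subgroup of $G$ of finite index, then $H\langle g\rangle = G$, and $G/H$ is a $p$-group, where $p = |G/\mathbf{Coc}_{\mathbb{Z}\text{-mmx}}(G)|$ (which is a prime).
   Context: An $R$-module is minimax if it has a finite series of submodules whose factors are each noetherian or artinian. For a subgroup $H$ of $G$, $C_A(H)$ is the set of elements of $A$ fixed by all of $H$. $\mathbf{Coc}_{\mathbb{Z}\text{-mmx}}(G) = \{x \in G \mid A/C_A(x) \text{ is a minimax } \mathbb{Z}\text{-module}\}$. A $\mathbb{Z}G$-module $A$ is minimax-antifinitary if $A/C_A(H)$ is a minimax $\mathbb{Z}$-module for every proper subgroup $H$ of $G$ that is not finitely generated, while $A/C_A(G)$ is not a minimax $\mathbb{Z}$-module. A group is generalized radical if it has an ascending series whose factors are locally nilpotent or locally finite; it is locally generalized radical if each finitely generated subgroup is generalized radical. *)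

From Stdlib Require List.
From mathcomp Require Import all_boot all_algebra.
Local Open Scope ring_scope.

Record group := Group {
  gcar :> Type;
  gmul : gcar -> gcar -> gcar;
  gone : gcar;
  ginv : gcar -> gcar;
  gmulA : forall x y z, gmul x (gmul y z) = gmul (gmul x y) z;
  gmul1 : forall x, gmul gone x = x;
  gmulV : forall x, gmul (ginv x) x = gone }.

Arguments gmul {g}.
Arguments gone {g}.
Arguments ginv {g}.

Section GroupDefs.
Variable G : group.

Definition is_subgroup (H : G -> Prop) : Prop :=
  H gone /\ (forall x y, H x -> H y -> H (gmul x y)) /\
  (forall x, H x -> H (ginv x)).

Definition gen (S : G -> Prop) : G -> Prop :=
  fun x => forall K, is_subgroup K -> (forall y, S y -> K y) -> K x.

Definition in_list (l : list G) : G -> Prop := fun x => List.In x l.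

Definition fin_gen_sub (H : G -> Prop) : Prop :=
  exists l : list G, forall x, H x <-> gen (in_list l) x.

Definition fin_gen_group : Prop :=
  exists l : list G, forall x, gen (in_list l) x.

Definition normal_in (N K : G -> Prop) : Prop :=
  forall x y, N x -> K y -> N (gmul (ginv y) (gmul x y)).

Fixpoint gpow (x : G) (n : nat) : G :=
  match n with O => gone | S m => gmul x (gpow x m) end.

Definition comm (x y : G) : G := gmul (ginv x) (gmul (ginv y) (gmul x y)).

Definition lcomm (y0 : G) (ys : list G) : G := List.fold_left comm ys y0.

(* the factor K/N (N normal in K) is locally nilpotent: for every finitely
   generated subgroup <l> of K, <l>N/N is nilpotent (of some class c) *)
Definition loc_nilpotent_factor (K N : G -> Prop) : Prop :=
  forall l : list G, (forall x, List.In x l -> K x) ->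
  exists c : nat, forall (y0 : G) (ys : list G),
    gen (in_list l) y0 -> (forall y, List.In y ys -> gen (in_list l) y) ->
    length ys = c -> N (lcomm y0 ys).

(* the factor K/N is locally finite: for every finite l in K, <l>N/N is finite *)
Definition loc_finite_factor (K N : G -> Prop) : Prop :=
  forall l : list G, (forall x, List.In x l -> K x) ->
  exists r : list G, forall y, gen (in_list l) y ->
    exists z, List.In z r /\ N (gmul (ginv z) y).

(* K (a subgroup of G) is generalized radical: it has an ascending series
   (indexed by a well-ordered set I with least element bot and greatest top,
   continuous at limits) whose factors are locally nilpotent or locally finite *)
Definition gen_radical (K : G -> Prop) : Prop :=
  exists (I : Type) (lt : I -> I -> Prop) (bot top : I) (F : I -> G -> Prop),
    well_founded lt /\
    (forall a b c, lt a b -> lt b c -> lt a c) /\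
    (forall a b, lt a b \/ a = b \/ lt b a) /\
    (forall a, a = bot \/ lt bot a) /\
    (forall a, a = top \/ lt a top) /\
    (forall a, is_subgroup (F a)) /\
    (forall a b x, lt a b -> F a x -> F b x) /\
    (forall x, F bot x <-> x = gone) /\
    (forall x, F top x <-> K x) /\
    (* limit steps: union of the preceding terms *)
    (forall b, b <> bot -> (forall a, ~ (lt a b /\ ~ exists c, lt a c /\ lt c b)) ->
       forall x, F b x -> exists a, lt a b /\ F a x) /\
    (forall a b, lt a b -> ~ (exists c, lt a c /\ lt c b) ->
       normal_in (F a) (F b) /\
       (loc_nilpotent_factor (F b) (F a) \/ loc_finite_factor (F b) (F a))).

Definition loc_gen_radical : Prop :=
  forall l : list G, gen_radical (gen (in_list l)).

Definition finite_index (H : G -> Prop) : Prop :=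
  exists r : list G, forall x, exists z, List.In z r /\ H (gmul (ginv z) x).

Definition index_eq (N : G -> Prop) (p : nat) : Prop :=
  exists r : list G, length r = p /\
    (forall x, exists z, List.In z r /\ N (gmul (ginv z) x)) /\
    (forall i j, (i < p)%N -> (j < p)%N ->
       N (gmul (ginv (List.nth i r gone)) (List.nth j r gone)) -> i = j).

End GroupDefs.

Record ZGmodule (G : group) (A : zmodType) := ZGModule {
  act : G -> A -> A;
  act_add : forall g a b, act g (a + b) = act g a + act g b;
  act_one : forall a, act gone a = a;
  act_mul : forall g h a, act (gmul g h) a = act g (act h a) }.

Arguments act {G A}.

Section ModDefs.
Variable A : zmodType.

Definition zsubgroup (M : A -> Prop) : Prop :=
  M 0 /\ (forall a b, M a -> M b -> M (a + b)) /\ (forall a, M a -> M (- a)).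

Definition noetherian_factor (B C : A -> Prop) : Prop :=
  forall M : nat -> A -> Prop,
    (forall n, zsubgroup (M n) /\ (forall a, C a -> M n a) /\
               (forall a, M n a -> B a) /\ (forall a, M n a -> M n.+1 a)) ->
    exists N, forall n, (N <= n)%N -> forall a, M n a <-> M N a.

Definition artinian_factor (B C : A -> Prop) : Prop :=
  forall M : nat -> A -> Prop,
    (forall n, zsubgroup (M n) /\ (forall a, C a -> M n a) /\
               (forall a, M n a -> B a) /\ (forall a, M n.+1 a -> M n a)) ->
    exists N, forall n, (N <= n)%N -> forall a, M n a <-> M N a.

(* A/C is a minimax Z-module: a finite series C = M_0 <= ... <= M_n = A
   of subgroups with each factor noetherian or artinian *)
Definition minimax_quot (C : A -> Prop) : Prop :=
  exists (n : nat) (M : nat -> A -> Prop),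
    (forall i, zsubgroup (M i)) /\
    (forall a, M 0%N a <-> C a) /\
    (forall a, M n a) /\
    (forall i, (i < n)%N ->
       (forall a, M i a -> M i.+1 a) /\
       (noetherian_factor (M i.+1) (M i) \/ artinian_factor (M i.+1) (M i))).
End ModDefs.

Section CocDefs.
Variables (G : group) (A : zmodType) (V : ZGmodule G A).

Definition cent (H : G -> Prop) : A -> Prop :=
  fun a => forall h, H h -> act V h a = a.

Definition Coc : G -> Prop :=
  fun x => @minimax_quot A (cent (fun y => y = x)).

Definition minimax_antifinitary : Prop :=
  (forall H : G -> Prop, @is_subgroup G H -> (exists x, ~ H x) ->
     ~ @fin_gen_sub G H -> @minimax_quot A (cent H)) /\
  ~ @minimax_quot A (cent (fun _ => True)).
End CocDefs.

Arguments is_subgroup {G}.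
Arguments gen {G}.
Arguments in_list {G}.
Arguments fin_gen_sub {G}.
Arguments normal_in {G}.
Arguments gpow {G}.
Arguments finite_index {G}.
Arguments index_eq {G}.
Arguments cent {G A}.
Arguments Coc {G A}.
Arguments minimax_antifinitary {G A}.

(* Call K <= G cofinitely generated if G = <l, K> for a finite list l.  A proper
   such K is not finitely generated (else G would be), so the antifinitary
   hypothesis makes A/C_A(K) minimax and K <= Coc(G); i.e. every cofinitely
   generated subgroup is G or lies in Coc(G), which is a normal subgroup since
   minimax sections are closed under extensions and subquotients.
   Applied to Coc(G)<g^n> (with G = <g>Coc(G)), this shows that n |-> [g^n in
   Coc(G)] is the subgroup pZ of Z, where p is prime because for every n either
   g^n or some g^(1-nz) lies in Coc(G); so |G : Coc(G)| = p.  Applied to H<g>,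
   it gives G = H<g> since g is not in Coc(G); and if g has order m modulo H,
   for a prime q dividing m the subgroup H<g^q> cannot be G (that would make q
   divide 1), so g^q is in Coc(G) and q = p.  Hence m is a power of p and every
   x = h g^z satisfies x^m in H. *)

From Stdlib Require List.
From mathcomp Require Import all_boot all_algebra.
From Stdlib Require Import Classical ClassicalEpsilon.
From mathcomp Require Import zify.
Import GRing.Theory.

Section ZmodFactors.
Context {A : zmodType}.
Local Open Scope ring_scope.
Implicit Types B C X Y : A -> Prop.

Lemma addmorph0 (f : A -> A) : {morph f : a b / a + b} -> f 0 = 0.
Proof. by move=> fD; apply: (@addrI _ (f 0)); rewrite -fD !addr0. Qed.

Lemma addmorphN (f : A -> A) : {morph f : a b / a + b} -> {morph f : a / - a}.
Proof. by move=> fD a; apply: (@addrI _ (f a)); rewrite -fD !subrr addmorph0. Qed.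

Definition incl X Y := forall a, X a -> Y a.

Definition between B C X := zsubgroup A X /\ incl C X /\ incl X B.

Definition na_factor B C := noetherian_factor A B C \/ artinian_factor A B C.

Definition interval_embedding B C B' C' (f : (A -> Prop) -> A -> Prop) :=
  [/\ forall X, between B' C' X -> between B C (f X),
      forall X Y, between B' C' X -> between B' C' Y -> incl X Y -> incl (f X) (f Y) &
      forall X Y, between B' C' X -> between B' C' Y -> incl (f X) (f Y) -> incl X Y].

Section Embedding.
Context {B C B' C' : A -> Prop} {f : (A -> Prop) -> A -> Prop}.
Hypothesis f_emb : interval_embedding B C B' C' f.

Lemma stable_chain_embedding (M : nat -> A -> Prop) :
  (forall n, between B' C' (M n)) ->
  (exists N, forall n, (N <= n)%N -> forall a, f (M n) a <-> f (M N) a) ->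
  exists N, forall n, (N <= n)%N -> forall a, M n a <-> M N a.
Proof.
case: f_emb => _ _ f_refl hM [N hN]; exists N => n le_Nn a.
by split; apply: f_refl a => // b; move/(hN n le_Nn b).
Qed.

Lemma noetherian_factor_embedding :
  noetherian_factor A B C -> noetherian_factor A B' C'.
Proof.
move=> noethBC M hM; have hMi n : between B' C' (M n) by case: (hM n) => [? [? [? _]]]; split.
apply: (stable_chain_embedding M hMi); apply: noethBC => n.
case: f_emb => f_between f_mono _; have [? [? ?]] := f_between _ (hMi n).
by do !split => //; apply: f_mono => //; have [_ [_ [_ ?]]] := hM n.
Qed.

Lemma artinian_factor_embedding :
  artinian_factor A B C -> artinian_factor A B' C'.
Proof.
move=> artBC M hM; have hMi n : between B' C' (M n) by case: (hM n) => [? [? [? _]]]; split.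
apply: (stable_chain_embedding M hMi); apply: artBC => n.
case: f_emb => f_between f_mono _; have [? [? ?]] := f_between _ (hMi n).
by do !split => //; apply: f_mono => //; have [_ [_ [_ ?]]] := hM n.
Qed.

Lemma na_factor_embedding : na_factor B C -> na_factor B' C'.
Proof.
case=> [?|?]; [left; exact: noetherian_factor_embedding
              | right; exact: artinian_factor_embedding].
Qed.

End Embedding.

Lemma na_factor_ext B C B' C' :
  (forall a, B a <-> B' a) -> (forall a, C a <-> C' a) ->
  na_factor B C -> na_factor B' C'.
Proof.
move=> eqB eqC; apply: (na_factor_embedding (f := id)); split => // X [? [sCX sXB]].
by split => //; split=> a; [move/eqC/sCX | move/sXB/eqB].
Qed.

Definition minimax_factor B C := exists n (M : nat -> A -> Prop),
  (forall i, zsubgroup A (M i)) /\ (forall a, M 0%N a <-> C a) /\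
  (forall a, M n a <-> B a) /\
  (forall i, (i < n)%N -> incl (M i) (M i.+1) /\ na_factor (M i.+1) (M i)).

Lemma minimax_factorT C : minimax_factor (fun _ => True) C <-> minimax_quot A C.
Proof.
split=> -[n [M [h1 [h2 [h3 h4]]]]]; exists n, M; do !split => //.
all: try by move=> a; apply/h3.
all: try by move=> i /h4 [].
Qed.

Lemma minimax_factor_trans {B C E} :
  minimax_factor B C -> minimax_factor E B -> minimax_factor E C.
Proof.
move=> [n1 [P [p1 [p2 [p3 p4]]]]] [n2 [Q [q1 [q2 [q3 q4]]]]].
exists (n1 + n2)%N, (fun i => if (i < n1)%N then P i else Q (i - n1)%N).
split; first by move=> i; case: ifP.
split.
  case: ifP => // n1_0 a; move: n1_0; rewrite lt0n => /negbFE/eqP n1_0.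
  by rewrite q2 -p3 n1_0 p2.
split; first by rewrite ltnNge leq_addr /= => a; rewrite addKn q3.
move=> i lt_i_n; case: (ltnP i.+1 n1) => [lt_i1_n1|le_n1_i1].
  by rewrite (ltnW lt_i1_n1); apply: p4; apply: ltnW.
case: (ltnP i n1) => [lt_i_n1|le_n1_i]; last first.
  by rewrite subSn //; apply: q4; rewrite ltn_subLR.
have ei : i.+1 = n1 by apply/eqP; rewrite eqn_leq le_n1_i1 lt_i_n1.
rewrite -ei subnn; have [sPP naP] := p4 i lt_i_n1; split.
  by move=> a /sPP; rewrite ei q2 p3.
by apply: na_factor_ext naP => a //; rewrite ei q2 p3.
Qed.

Definition zsum X Y : A -> Prop := fun a => exists x y, X x /\ Y y /\ a = x + y.

Definition zcap X Y : A -> Prop := fun a => X a /\ Y a.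

Lemma zsubgroup_sum X Y : zsubgroup A X -> zsubgroup A Y -> zsubgroup A (zsum X Y).
Proof.
move=> [X0 [XD XN]] [Y0 [YD YN]]; split; first by exists 0, 0; rewrite addr0.
split=> [_ _ [x1 [y1 [Xx1 [Yy1 ->]]]] [x2 [y2 [Xx2 [Yy2 ->]]]] | _ [x [y [Xx [Yy ->]]]]].
  by exists (x1 + x2), (y1 + y2); rewrite addrACA; do !split; [apply: XD | apply: YD].
by exists (- x), (- y); rewrite opprD; do !split; [apply: XN | apply: YN].
Qed.

Lemma zsubgroup_cap X Y : zsubgroup A X -> zsubgroup A Y -> zsubgroup A (zcap X Y).
Proof.
move=> [X0 [XD XN]] [Y0 [YD YN]]; split; first by [].
by split=> [a b [? ?] [? ?] | a [? ?]]; split; auto.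
Qed.

Lemma zsum_l {X Y x} : zsubgroup A Y -> X x -> zsum X Y x.
Proof. by move=> [Y0 _] Xx; exists x, 0; rewrite addr0. Qed.

Lemma zsum_r {X Y y} : zsubgroup A X -> Y y -> zsum X Y y.
Proof. by move=> [X0 _] Yy; exists 0, y; rewrite add0r. Qed.

Lemma minimax_factor_quotient {B C C'} :
  minimax_factor B C -> zsubgroup A C' -> incl C C' -> incl C' B ->
  minimax_factor B C'.
Proof.
case=> n [M [sgM [M0 [Mn MS]]]] sgC' sCC' sC'B.
exists n, (fun i => zsum (M i) C'); split; first by move=> i; apply: zsubgroup_sum.
split.
  move=> a; split=> [[m [c [/M0/sCC' C'm [C'c ->]]]] | C'a]; last exact: zsum_r.
  by case: sgC' => _ [C'D _]; apply: C'D.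
split.
  move=> a; split=> [[m [c [/Mn Bm [/sC'B Bc ->]]]] | /Mn Mna]; last exact: zsum_l.
  by have [_ [MnD _]] := sgM n; apply/Mn; apply: MnD; apply/Mn.
move=> i lt_i_n; have [sMM na] := MS i lt_i_n; split.
  by move=> a [m [c [/sMM ? [? ->]]]]; exists m, c.
apply: (na_factor_embedding (f := fun X => zcap X (M i.+1))) na; split.
- move=> X [sgX [sX1 sX2]]; split; first exact: zsubgroup_cap.
  split=> [a Ma | a [] //]; split; last exact: sMM.
  by apply: sX1; apply: zsum_l.
- by move=> X Y _ _ sXY a [Xa Ma]; split => //; apply: sXY.
- move=> X Y [[_ [XD XN]] [sX1 sX2]] [[_ [YD _]] [sY1 _]] sXY a Xa.
  have [m [c [Mm [C'c ea]]]] := sX2 a Xa.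
  have Xc : X c by apply: sX1; apply: zsum_r.
  have Xm : X m by have := XD _ _ Xa (XN _ Xc); rewrite ea addrK.
  have [Ym _] := sXY m (conj Xm Mm).
  by rewrite ea; apply: YD => //; apply: sY1; apply: zsum_r.
Qed.

Lemma minimax_factor_cap {C1 C2} :
  minimax_factor (fun _ => True) C1 -> zsubgroup A C2 ->
  minimax_factor C2 (zcap C1 C2).
Proof.
case=> n [M [sgM [M0 [Mn MS]]]] sgC2.
exists n, (fun i => zcap (M i) C2); split; first by move=> i; apply: zsubgroup_cap.
split; first by move=> a; split=> -[/M0 ? ?].
split; first by move=> a; split=> [[] | C2a] //; split => //; apply/Mn.
move=> i lt_i_n; have [sMM na] := MS i lt_i_n; split; first by move=> a [/sMM ? ?].
apply: (na_factor_embedding (f := fun X => zsum X (M i))) na; split.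
- move=> X [sgX [sX1 sX2]]; split; first exact: zsubgroup_sum.
  split=> [a Ma | _ [x [m [/sX2 [Mx _] [/sMM Mm ->]]]]]; first exact: zsum_r.
  by have [_ [MD _]] := sgM i.+1; apply: MD.
- by move=> X Y _ _ sXY _ [x [m [Xx [Mm ->]]]]; exists x, m; do !split => //; apply: sXY.
- move=> X Y [[_ [XD XN]] [sX1 sX2]] [[_ [YD YN]] [sY1 sY2]] sXY a Xa.
  have [y [m [Yy [Mm ea]]]] := sXY a (zsum_l (sgM i) Xa).
  have [[_ C2a] [_ C2y]] := (sX2 a Xa, sY2 y Yy).
  have C2m : C2 m.
    by case: sgC2 => _ [C2D C2N]; have := C2D _ _ (C2N _ C2y) C2a; rewrite ea addKr.
  by rewrite ea; apply: YD => //; apply: sY1.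
Qed.

Lemma zsubgroup_comap (f : A -> A) X :
  {morph f : a b / a + b} -> zsubgroup A X -> zsubgroup A (fun a => X (f a)).
Proof.
move=> fD [X0 [XD XN]]; split; first by rewrite addmorph0.
by split=> [a b ? ?|a ?]; [rewrite fD; apply: XD | rewrite addmorphN //; apply: XN].
Qed.

Lemma minimax_factor_comap {C} {phi psi : A -> A} :
  {morph phi : a b / a + b} -> cancel phi psi -> cancel psi phi ->
  minimax_factor (fun _ => True) C ->
  minimax_factor (fun _ => True) (fun a => C (phi a)).
Proof.
move=> phiD phiK psiK [n [M [sgM [M0 [Mn MS]]]]].
have psiD : {morph psi : a b / a + b}.
  by move=> a b; apply: (can_inj phiK); rewrite phiD !psiK.
exists n, (fun i a => M i (phi a)); split; first by move=> i; apply: zsubgroup_comap.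
split; first by move=> a; rewrite M0.
split; first by move=> a; split => // _; apply/Mn.
move=> i lt_i_n; have [sMM na] := MS i lt_i_n; split; first by move=> a /sMM.
apply: (na_factor_embedding (f := fun X b => X (psi b))) na; split.
- move=> X [sgX [sX1 sX2]]; split; first exact: zsubgroup_comap.
  by split=> a; [rewrite -{1}[a]psiK; apply: sX1 | move/sX2; rewrite psiK].
- by move=> X Y _ _ sXY a; apply: sXY.
- by move=> X Y _ _ sXY a Xa; have := sXY (phi a); rewrite phiK; apply.
Qed.

End ZmodFactors.

Arguments gmulA {g}.
Arguments gmul1 {g}.
Arguments gmulV {g}.

Section GroupFacts.
Context {G : group}.
Implicit Types x y z : G.

Lemma gmulgV x : gmul x (ginv x) = gone.
Proof.
rewrite -[gmul x _]gmul1 -(gmulV (ginv x)) -gmulA (gmulA (ginv x)) gmulV.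
by rewrite gmul1 gmulV.
Qed.

Lemma gmulg1 x : gmul x gone = x.
Proof. by rewrite -(gmulV x) gmulA gmulgV gmul1. Qed.

Lemma gmulKg x y : gmul (ginv x) (gmul x y) = y.
Proof. by rewrite gmulA gmulV gmul1. Qed.

Lemma gmulKVg x y : gmul x (gmul (ginv x) y) = y.
Proof. by rewrite gmulA gmulgV gmul1. Qed.

Lemma gmulgK x y : gmul (gmul x y) (ginv y) = x.
Proof. by rewrite -gmulA gmulgV gmulg1. Qed.

Lemma gmulgKV x y : gmul (gmul x (ginv y)) y = x.
Proof. by rewrite -gmulA gmulV gmulg1. Qed.

Lemma ginv_uniq x y : gmul x y = gone -> y = ginv x.
Proof. by move=> xy1; rewrite -(gmulKg x y) xy1 gmulg1. Qed.

Lemma ginvK x : ginv (ginv x) = x.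
Proof. by symmetry; apply: ginv_uniq; rewrite gmulV. Qed.

Lemma ginvM x y : ginv (gmul x y) = gmul (ginv y) (ginv x).
Proof. by symmetry; apply: ginv_uniq; rewrite -gmulA gmulKVg gmulgV. Qed.

Lemma ginv1 : ginv (gone : G) = gone.
Proof. by symmetry; apply: ginv_uniq; rewrite gmul1. Qed.

Lemma gen_subgroup (S : G -> Prop) : is_subgroup (gen S).
Proof.
split; first by move=> K [].
split=> [x y Sx Sy | x Sx] K sgK SK; have [_ [KM KV]] := sgK.
  by apply: KM; [apply: Sx | apply: Sy].
by apply: KV; apply: Sx.
Qed.

Lemma gen_in (S : G -> Prop) x : S x -> gen S x.
Proof. by move=> Sx K _; apply. Qed.

Lemma gen_min (S K : G -> Prop) : is_subgroup K -> (forall y, S y -> K y) ->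
  forall x, gen S x -> K x.
Proof. by move=> sgK sSK x; apply. Qed.

Lemma gen_mono (S T : G -> Prop) x : (forall y, S y -> T y) -> gen S x -> gen T x.
Proof. by move=> sST Sx K sgK sTK; apply: Sx => // y /sST /sTK. Qed.

Definition generates_mod (N : G -> Prop) (l : list G) : Prop :=
  forall x, gen (fun u => in_list l u \/ N u) x.

Lemma gpowD x m n : gpow x (m + n) = gmul (gpow x m) (gpow x n).
Proof. by elim: m => [|m IH] /=; rewrite ?gmul1 // IH gmulA. Qed.

Lemma gpow1 x : gpow x 1 = x.
Proof. by rewrite /= gmulg1. Qed.

Local Open Scope ring_scope.

Definition zpow x (z : int) : G :=
  match z with Posz n => gpow x n | Negz n => ginv (gpow x n.+1) end.

Lemma zpow_nat x n : zpow x n%:Z = gpow x n.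
Proof. by []. Qed.

Lemma zpow1 x : zpow x 1 = x.
Proof. exact: gpow1. Qed.

Lemma zpowS x (z : int) : zpow x (z + 1) = gmul (zpow x z) x.
Proof.
case: z => [n|[|n]]; first by rewrite -PoszD /= gpowD gpow1.
  by rewrite /= gmulg1 gmulV.
have -> : Negz n.+1 + 1 = Negz n by rewrite !NegzE -addn1 PoszD opprD addrK.
by rewrite /= [ginv (gmul x (gmul x _))]ginvM gmulgKV.
Qed.

Lemma zpowB1 x (z : int) : zpow x (z - 1) = gmul (zpow x z) (ginv x).
Proof. by rewrite -{2}(subrK 1 z) zpowS gmulgK. Qed.

Lemma zpowD x (a b : int) : zpow x (a + b) = gmul (zpow x a) (zpow x b).
Proof.
have addP (n : nat) : zpow x (a + n%:Z) = gmul (zpow x a) (zpow x n%:Z).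
  elim: n => [|n IH]; first by rewrite addr0 /= gmulg1.
  by rewrite -addn1 PoszD addrA !zpowS IH gmulA.
have addN (n : nat) : zpow x (a - n%:Z) = gmul (zpow x a) (zpow x (- n%:Z)).
  elim: n => [|n IH]; first by rewrite subr0 /= gmulg1.
  by rewrite -addn1 PoszD opprD addrA !zpowB1 IH gmulA.
by case: b => n; [apply: addP | rewrite NegzE addN].
Qed.

Lemma zpowN x (a : int) : zpow x (- a) = ginv (zpow x a).
Proof. by apply: ginv_uniq; rewrite -zpowD subrr. Qed.

Lemma gpow_zpow x (a : int) n : gpow (zpow x a) n = zpow x (a * n%:Z).
Proof.
elim: n => [|n IH]; first by rewrite mulr0.
by rewrite /= IH -addn1 PoszD mulrDr mulr1 addrC zpowD.
Qed.

Lemma zpowM x (a b : int) : zpow (zpow x a) b = zpow x (a * b).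
Proof.
case: b => n; first exact: gpow_zpow.
by rewrite NegzE mulrN !zpowN zpow_nat gpow_zpow.
Qed.

Definition cycle_supplement (N : G -> Prop) (g : G) : Prop :=
  forall x, exists y c, gen (fun z => z = g) y /\ N c /\ x = gmul y c.

Lemma gen_cycleP x y : gen (fun z => z = x) y <-> exists k, y = zpow x k.
Proof.
split=> [gen_y|[k ->]].
  apply: (gen_min _ (fun y => exists k, y = zpow x k) _ _ y gen_y) => [|_ ->]; last first.
    by exists 1; rewrite zpow1.
  split; first by exists 0.
  split; first by move=> _ _ [k ->] [l ->]; exists (k + l); rewrite zpowD.
  by move=> _ [k ->]; exists (- k); rewrite zpowN.
have [gen1 [genM genV]] := gen_subgroup (fun y => y = x).
have gen_gpow n : gen (fun y => y = x) (gpow x n).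
  by elim: n => [|n IH] //=; apply: genM IH; apply: gen_in.
by case: k => n; [apply: gen_gpow | apply: genV; apply: gen_gpow].
Qed.

Lemma subgroup_zpow (N : G -> Prop) y (z : int) : is_subgroup N -> N y -> N (zpow y z).
Proof.
move=> sgN Ny; apply: (gen_min (fun x => x = y)) => [//|_ -> //|].
by apply/gen_cycleP; exists z.
Qed.

End GroupFacts.

Section Centralizers.
Context {G : group} {A : zmodType} (V : ZGmodule G A).
Local Open Scope ring_scope.

Lemma actK h : cancel (act V h) (act V (ginv h)).
Proof. by move=> a; rewrite -act_mul gmulV act_one. Qed.

Lemma actVK h : cancel (act V (ginv h)) (act V h).
Proof. by move=> a; rewrite -act_mul gmulgV act_one. Qed.

Lemma cent_zsubgroup (K : G -> Prop) : zsubgroup A (cent V K).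
Proof.
split; first by move=> h _; rewrite addmorph0 // => a b; apply: act_add.
split; first by move=> a b Ka Kb h Kh; rewrite act_add Ka ?Kb.
by move=> a Ka h Kh; rewrite addmorphN ?Ka // => b c; apply: act_add.
Qed.

Lemma minimax_quot_ext (C C' : A -> Prop) :
  (forall a, C a <-> C' a) -> minimax_quot A C -> minimax_quot A C'.
Proof.
move=> eqC [n [M [h1 [h2 h34]]]]; exists n, M; do 2!split => //.
by move=> a; rewrite h2.
Qed.

Lemma Coc1 : Coc V gone.
Proof.
exists 0%N, (fun _ _ => True); split=> //; split=> [a|//].
by split=> // _ _ ->; rewrite act_one.
Qed.

Lemma CocV x : Coc V x -> Coc V (ginv x).
Proof.
apply: minimax_quot_ext => a; split=> fix_a _ ->.
  by rewrite -{1}(fix_a x erefl) actK.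
by rewrite -{1}(fix_a (ginv x) erefl) actVK.
Qed.

(* C_A(x) cap C_A(y) <= C_A(xy), and C_A(y) / (C_A(x) cap C_A(y)) embeds in
   A / C_A(x). *)
Lemma CocM x y : Coc V x -> Coc V y -> Coc V (gmul x y).
Proof.
move=> /minimax_factorT Cx /minimax_factorT Cy.
have Cxy := minimax_factor_trans (minimax_factor_cap Cx (cent_zsubgroup _)) Cy.
apply/minimax_factorT; apply: (minimax_factor_quotient Cxy (cent_zsubgroup _)) => //.
by move=> a [fix_x fix_y] _ ->; rewrite act_mul (fix_y y erefl) (fix_x x erefl).
Qed.

Lemma Coc_normal : normal_in (Coc V) (fun _ => True).
Proof.
move=> x y /minimax_factorT Cx _.
have := minimax_factor_comap (@act_add _ _ V y) (actK y) (actVK y) Cx.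
move/minimax_factorT; apply: minimax_quot_ext => a; split=> fix_a _ ->.
  by rewrite !act_mul (fix_a x erefl) actK.
by have := f_equal (act V y) (fix_a _ erefl); rewrite !act_mul actVK.
Qed.

Lemma Coc_subgroup : is_subgroup (Coc V).
Proof. by split; [apply: Coc1 | split; [apply: CocM | apply: CocV]]. Qed.

Lemma Coc_cent (K : G -> Prop) x : minimax_quot A (cent V K) -> K x -> Coc V x.
Proof.
move=> /minimax_factorT CK Kx; apply/minimax_factorT.
by apply: (minimax_factor_quotient CK (cent_zsubgroup _)) => // a fix_a _ ->; apply: fix_a.
Qed.

Lemma fin_gen_group_of_sub (K : G -> Prop) (l : list G) :
  fin_gen_sub K -> generates_mod K l -> fin_gen_group G.
Proof.
move=> [lK eqK] genG; exists (l ++ lK)%list => x.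
apply: (gen_min _ _ (gen_subgroup _) _ x (genG x)) => y [ly|Ky].
  by apply: gen_in; apply: List.in_or_app; left.
apply: (gen_mono (in_list lK)); last by apply/eqK.
by move=> u lKu; apply: List.in_or_app; right.
Qed.

Lemma Coc_dichotomy (K : G -> Prop) (l : list G) :
  minimax_antifinitary V -> ~ fin_gen_group G -> is_subgroup K ->
  generates_mod K l ->
  (forall x, K x) \/ (forall x, K x -> Coc V x).
Proof.
move=> [antiV _] G_nfg sgK genG.
have [K_full|K_proper] := classic (forall x, K x); [by left | right].
have [x0 K'x0] := not_all_ex_not _ _ K_proper.
have K_nfg : ~ fin_gen_sub K by move=> /fin_gen_group_of_sub /(_ genG).
by move=> x; apply: Coc_cent; apply: antiV => //; exists x0.
Qed.

End Centralizers.

Section MulCycle.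
Context {G : group} (N : G -> Prop).
Hypotheses (sgN : is_subgroup N) (nN : normal_in N (fun _ => True)).
Local Open Scope ring_scope.

Definition mul_cycle (y : G) : G -> Prop :=
  fun x => exists c z, N c /\ x = gmul c (zpow y z).

Lemma mul_cycle_subgroup y : is_subgroup (mul_cycle y).
Proof.
have [N1 [NM NV]] := sgN.
split; first by exists gone, 0; split => //; rewrite gmulg1.
split=> [_ _ [c1 [z1 [Nc1 ->]]] [c2 [z2 [Nc2 ->]]] | _ [c [z [Nc ->]]]].
  have Nc2' := nN c2 (ginv (zpow y z1)) Nc2 I; rewrite ginvK in Nc2'.
  exists (gmul c1 (gmul (zpow y z1) (gmul c2 (ginv (zpow y z1))))), (z1 + z2).
  by split; [apply: NM | rewrite zpowD -!gmulA gmulKg].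
have Nc' := nN (ginv c) (zpow y z) (NV _ Nc) I.
exists (gmul (ginv (zpow y z)) (gmul (ginv c) (zpow y z))), (- z); split => //.
by rewrite zpowN ginvM -!gmulA gmulgV gmulg1.
Qed.

Lemma mul_cycle_sub y c : N c -> mul_cycle y c.
Proof. by move=> Nc; exists c, 0; split => //; rewrite gmulg1. Qed.

Lemma mul_cycle_gen y : mul_cycle y y.
Proof. by have [N1 _] := sgN; exists gone, 1; rewrite zpow1 gmul1. Qed.

Lemma gpow_mul_coset c y n : N c -> N (gmul (gpow (gmul c y) n) (ginv (gpow y n))).
Proof.
have [N1 [NM _]] := sgN; move=> Nc; elim: n => [|n IH]; first by rewrite /= ginv1 gmul1.
have := NM _ _ Nc (nN _ (ginv y) IH I).
by rewrite /= ginvK ginvM -!gmulA.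
Qed.

Lemma mul_cycle_gpow x y n : N (gpow y n) -> mul_cycle y x -> N (gpow x n).
Proof.
have [_ [NM _]] := sgN; move=> Nyn [c [z [Nc ->]]].
have Nyzn : N (gpow (zpow y z) n).
  by rewrite gpow_zpow mulrC -zpowM; apply: subgroup_zpow.
by have := NM _ _ (gpow_mul_coset _ (zpow y z) n Nc) Nyzn; rewrite gmulgKV.
Qed.

End MulCycle.

Section IntArith.
Local Open Scope ring_scope.

Lemma ex_minn_Prop (Q : nat -> Prop) :
  (exists n, Q n) -> exists n, Q n /\ forall m, Q m -> (n <= m)%N.
Proof.
pose b n := if excluded_middle_informative (Q n) then true else false.
have bP n : reflect (Q n) (b n) by rewrite /b; case: excluded_middle_informative; constructor.
move=> [n Qn]; have exb : exists n, b n by exists n; apply/bP.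
by case: (ex_minnP exb) => m /bP Qm m_min; exists m; split => // k /bP; apply: m_min.
Qed.

Lemma int_subgroup_dvd (P : int -> Prop) :
  P 0 -> (forall a b, P a -> P b -> P (a + b)) -> (forall a, P a -> P (- a)) ->
  (exists w, w != 0 /\ P w) ->
  exists m : nat, (0 < m)%N /\ forall z, P z <-> (m%:Z %| z)%Z.
Proof.
move=> P0 PD PN [w [w_neq0 Pw]].
have PMn a (n : nat) : P a -> P (a * n%:Z).
  move=> Pa; elim: n => [|n IH]; first by rewrite mulr0.
  by rewrite -addn1 PoszD mulrDr mulr1; apply: PD.
have PM a k : P a -> P (a * k).
  by case: k => n Pa; [apply: PMn | rewrite NegzE mulrN; apply/PN/PMn].
have /ex_minn_Prop [m [[m_gt0 Pm] m_min]] : exists n, (0 < n)%N /\ P n%:Z.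
  case: w w_neq0 Pw => n; last by exists n.+1; split => //; move/PN: Pw; rewrite NegzE opprK.
  by exists n; split => //; rewrite lt0n; apply: contra w_neq0 => /eqP ->.
exists m; split => // z; split=> [Pz|/dvdzP [q ->]]; last by rewrite mulrC; apply: PM.
have m_neq0 : m%:Z != 0 by rewrite -lt0n.
have [r r_def] : exists r : nat, (z %% m%:Z)%Z = r%:Z.
  by exists `|(z %% m%:Z)%Z|%N; rewrite gez0_abs // modz_ge0.
have r_lt_m : (r < m)%N by rewrite -ltz_nat -r_def ltz_pmod // ltz_nat.
have Pr : P r%:Z.
  rewrite -r_def; have -> : (z %% m%:Z)%Z = z + m%:Z * - (z %/ m%:Z)%Z.
    by rewrite mulrN mulrC {2}(divz_eq z m%:Z) addrAC subrr add0r.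
  by apply: PD => //; apply: PM.
apply/dvdz_mod0P; rewrite r_def; case: r {r_def} r_lt_m Pr => // r r_lt_m Pr.
by have := m_min _ (conj (ltn0Sn r) Pr); rewrite leqNgt r_lt_m.
Qed.

Lemma dvdz_subMr1 (d z : int) : (d %| 1 - d * z)%Z = (d %| 1)%Z.
Proof. by rewrite rpredBr // dvdz_mulr. Qed.

Lemma prime_of_dvd_dichotomy (p : nat) : (1 < p)%N ->
  (forall n : int, (p%:Z %| n)%Z \/ exists z, (p%:Z %| 1 - n * z)%Z) -> prime p.
Proof.
move=> p_gt1 dich; apply/primeP; split=> // d d_dvd_p.
have p_gt0 : (0 < p)%N by apply: ltnW.
have d_gt0 : (0 < d)%N := dvdn_gt0 p_gt0 d_dvd_p.
have [p_dvd_d | [z p_dvd]] := dich d.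
  have {}p_dvd_d : (p %| d)%N := p_dvd_d.
  by rewrite [d == p]eqn_leq (dvdn_leq p_gt0 d_dvd_p) (dvdn_leq d_gt0 p_dvd_d) orbT.
have : (d%:Z %| 1 - d%:Z * z)%Z by apply: dvdz_trans p_dvd; rewrite dvdzE.
by rewrite dvdz_subMr1 dvdz1 => /eqP /= ->.
Qed.

Lemma ppower_of_prime_divisors (p m : nat) : (0 < m)%N ->
  (forall q, prime q -> (q %| m)%N -> q = p) -> m = (p ^ logn p m)%N.
Proof.
move=> m_gt0 only_p; rewrite -p_part part_pnat_id //.
by apply/pnatP => // q q_prime q_dvd_m; rewrite (only_p q q_prime q_dvd_m) inE.
Qed.

End IntArith.

Section Cosets.
Context {G : group}.
Local Open Scope ring_scope.

Lemma finite_index_zpow (H : G -> Prop) (g : G) :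
  is_subgroup H -> finite_index H -> exists w : int, w != 0 /\ H (zpow g w).
Proof.
move=> [_ [HM HV]] [r cover]; set n := length r.
have /fin_all_exists [f f_rep] (i : 'I_n.+1) :
    exists k : 'I_n, H (gmul (ginv (List.nth k r gone)) (gpow g i)).
  have [x [x_in_r Hx]] := cover (gpow g i).
  have [k [/ltP k_lt_n kx]] := List.In_nth r x gone x_in_r.
  by exists (Ordinal k_lt_n); rewrite /= kx.
have [i [j [fij nij]]] : exists i j, f i = f j /\ i <> j.
  apply: NNPP => no_collision.
  have /leq_card : injective f.
    by move=> i j fij; apply: NNPP => nij; apply: no_collision; exists i, j.
  by rewrite !card_ord ltnn.
exists (j%:Z - i%:Z); split.
  by rewrite subr_eq0; apply: contra_not_neq nij => -[/val_inj].
have := HM _ _ (HV _ (f_rep i)) (f_rep j); rewrite fij ginvM ginvK -gmulA gmulKVg.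
by rewrite -!zpow_nat -zpowN -zpowD addrC.
Qed.

Lemma subgroup_zpow_dvd (N : G -> Prop) (g : G) :
  is_subgroup N -> (exists w, w != 0 /\ N (zpow g w)) ->
  exists m : nat, (0 < m)%N /\ forall z, N (zpow g z) <-> (m%:Z %| z)%Z.
Proof.
move=> [N1 [NM NV]]; apply: int_subgroup_dvd => [//|a b|a] /=.
  by rewrite zpowD; apply: NM.
by rewrite zpowN; apply: NV.
Qed.

Lemma finite_index_gen (N : G -> Prop) :
  finite_index N -> exists l, generates_mod N l.
Proof.
move=> [r cover]; exists r => x; have [z [z_in_r Nzx]] := cover x.
have [_ [genM _]] := gen_subgroup (fun u => in_list r u \/ N u).
by rewrite -(gmulKVg z x); apply: genM; apply: gen_in; [left | right].
Qed.

Lemma generator_notin_subgroup (N : G -> Prop) (g x : G) :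
  is_subgroup N -> ~ N x ->
  cycle_supplement N g -> ~ N g.
Proof.
move=> sgN N'x G_eq Ng; have [_ [NM _]] := sgN; apply: N'x.
have [y [c [/gen_cycleP [k ->] [Nc ->]]]] := G_eq x.
by apply: NM => //; apply: subgroup_zpow.
Qed.

Lemma cycle_mul_gen (N : G -> Prop) (g : G) :
  cycle_supplement N g -> generates_mod N [:: g].
Proof.
move=> G_eq x; have [y [c [gen_y [Nc ->]]]] := G_eq x.
have [_ [genM _]] := gen_subgroup (fun u => in_list [:: g] u \/ N u).
apply: genM; last by apply: gen_in; right.
by apply: gen_mono gen_y => _ ->; left; left.
Qed.

Lemma index_eq_cycle_mul (N : G -> Prop) (g : G) (p : nat) :
  is_subgroup N -> (0 < p)%N -> (forall z, N (zpow g z) <-> (p%:Z %| z)%Z) ->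
  cycle_supplement N g ->
  index_eq N p.
Proof.
move=> [_ [NM _]] p_gt0 N_exp G_eq.
exists (List.map (gpow g) (List.seq 0 p)).
split; first by rewrite List.length_map List.length_seq.
have nthE i : (i < p)%N -> List.nth i (List.map (gpow g) (List.seq 0 p)) gone = gpow g i.
  by move=> /ltP i_lt_p; rewrite (List.map_nth (gpow g) _ 0%N) List.seq_nth.
split=> [x | i j i_lt_p j_lt_p]; last first.
  rewrite !nthE // -!zpow_nat -zpowN -zpowD => /N_exp /dvdzP [q ji].
  have : (q <= -1 \/ q = 0 \/ 1 <= q)%R by lia.
  by case=> [?|[q0|?]]; nia.
have [y [c [/gen_cycleP [k ->] [Nc ->]]]] := G_eq x.
have p_neq0 : p%:Z != 0 by rewrite -lt0n.
set j := `|(k %% p%:Z)%Z|%N.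
have j_def : j%:Z = (k %% p%:Z)%Z by rewrite gez0_abs // modz_ge0.
have j_lt_p : (j < p)%N by rewrite -ltz_nat j_def ltz_pmod // ltz_nat.
exists (gpow g j); split.
  by apply: List.in_map; apply/List.in_seq; split; [apply/leP | apply/ltP].
rewrite -zpow_nat -zpowN gmulA -zpowD; apply: NM => //; apply/N_exp.
by rewrite j_def {2}(divz_eq k p%:Z) addrC addrK dvdz_mull.
Qed.

End Cosets.

Section Antifinitary.
Context {G : group} {A : zmodType} (V : ZGmodule G A).
Hypotheses (antiV : minimax_antifinitary V) (G_nfg : ~ fin_gen_group G).
Local Open Scope ring_scope.

Lemma mul_cycle_dichotomy (N : G -> Prop) (l : list G) (y : G) :
  is_subgroup N -> normal_in N (fun _ => True) ->
  generates_mod N l ->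
  (forall x, mul_cycle N y x) \/ Coc V y.
Proof.
move=> sgN nN genG.
have genGNy : generates_mod (mul_cycle N y) l.
  move=> x; apply: gen_mono (genG x) => u [lu|Nu]; [by left | right].
  exact: mul_cycle_sub.
have [full|sub_Coc] := Coc_dichotomy V _ l antiV G_nfg (mul_cycle_subgroup N sgN nN y) genGNy.
  by left.
by right; apply: sub_Coc; apply: mul_cycle_gen.
Qed.

Lemma zpow_dichotomy (N : G -> Prop) (l : list G) (g : G) (n : int) :
  is_subgroup N -> normal_in N (fun _ => True) ->
  generates_mod N l ->
  (exists z, N (zpow g (1 - n * z))) \/ Coc V (zpow g n).
Proof.
move=> sgN nN genG; case: (mul_cycle_dichotomy _ _ (zpow g n) sgN nN genG) => [full|]; [left|by right].
have [c [z [Nc g_eq]]] := full g; exists z.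
by rewrite zpowD zpowN zpow1 -zpowM {1}g_eq gmulgK.
Qed.

Lemma Coc_zpow_prime (g : G) :
  cycle_supplement (Coc V) g -> ~ Coc V g ->
  exists p, prime p /\ forall z, Coc V (zpow g z) <-> (p%:Z %| z)%Z.
Proof.
move=> G_eq g_notin_Coc.
have dich n : Coc V (zpow g n) \/ exists z, Coc V (zpow g (1 - n * z)).
  have := zpow_dichotomy _ _ g n (Coc_subgroup V) (Coc_normal V)
    (cycle_mul_gen _ g G_eq).
  by case=> [[z Cz]|Cn]; [right; exists z | left].
have [m [m_gt0 Cm]] : exists m : nat, (0 < m)%N /\ forall z, Coc V (zpow g z) <-> (m%:Z %| z)%Z.
  apply: subgroup_zpow_dvd (Coc_subgroup V) _.
  by have [C2|[z C2]] := dich 2; [exists 2 | exists (1 - 2 * z); split=> //; lia].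
exists m; split=> //; apply: prime_of_dvd_dichotomy.
  rewrite ltn_neqAle eq_sym m_gt0 andbT; apply: contra_not_neq g_notin_Coc => m1.
  by rewrite -(zpow1 g); apply/Cm; rewrite m1 dvd1z.
by move=> n; case: (dich n) => [/Cm|[z /Cm]]; [left | right; exists z].
Qed.

Section NormalFiniteIndex.
Variables (g : G) (H : G -> Prop).
Hypotheses (sgH : is_subgroup H) (nH : normal_in H (fun _ => True)).
Hypothesis finH : finite_index H.

Lemma mul_cycle_full : ~ Coc V g -> forall x, mul_cycle H g x.
Proof.
move=> g_notin_Coc; have [l genG] := finite_index_gen H finH.
by case: (mul_cycle_dichotomy _ l g sgH nH genG) => [|/g_notin_Coc].
Qed.

Lemma zpow_ppower_mem p : prime p -> (forall z, Coc V (zpow g z) <-> (p%:Z %| z)%Z) ->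
  exists k, H (gpow g (p ^ k)%N).
Proof.
move=> p_prime Cp; have [l genG] := finite_index_gen H finH.
have [m [m_gt0 Hm]] := subgroup_zpow_dvd H g sgH (finite_index_zpow H g sgH finH).
have Hgm : H (gpow g m) by rewrite -zpow_nat; apply/Hm.
exists (logn p m); rewrite -ppower_of_prime_divisors // => q q_prime q_dvd_m.
case: (zpow_dichotomy _ l g q sgH nH genG) => [[z /Hm m_dvd] | /Cp p_dvd_q].
  have : (q%:Z %| 1 - q%:Z * z)%Z by apply: dvdz_trans m_dvd.
  by rewrite dvdz_subMr1 dvdz1 => /eqP /= q1; rewrite q1 in q_prime.
by apply/eqP; rewrite eq_sym -dvdn_prime2.
Qed.

End NormalFiniteIndex.
End Antifinitary.

Theorem corollary3p3 (G : group) (A : zmodType) (V : ZGmodule G A)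
  (g : G) (H : G -> Prop) :
  loc_gen_radical G ->
  minimax_antifinitary V ->
  (exists x, ~ Coc V x) ->
  ~ fin_gen_group G ->
  (exists l : list G, forall x, gen (fun y => List.In y l \/ Coc V y) x) ->
  (forall x, exists y c, gen (fun z => z = g) y /\ Coc V c /\ x = gmul y c) ->
  is_subgroup H -> normal_in H (fun _ => True) -> finite_index H ->
  (forall x, exists h y, H h /\ gen (fun z => z = g) y /\ x = gmul h y) /\
  (exists p : nat, prime p /\ index_eq (Coc V) p /\
     forall x, exists k : nat, H (gpow x (p ^ k))).
Proof.
move=> _ antiV [x0 Coc'x0] G_nfg _ G_eq sgH nH finH.
have Coc'g := generator_notin_subgroup _ _ _ (Coc_subgroup V) Coc'x0 G_eq.
have HG := mul_cycle_full V antiV G_nfg g H sgH nH finH Coc'g.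
split.
  move=> x; have [c [z [Hc ->]]] := HG x.
  by exists c, (zpow g z); split=> //; split=> //; apply/gen_cycleP; exists z.
have [p [p_prime Cp]] := Coc_zpow_prime V antiV G_nfg g G_eq Coc'g.
exists p; split=> //; split.
  exact: index_eq_cycle_mul (Coc_subgroup V) (prime_gt0 p_prime) Cp G_eq.
have [k Hk] := zpow_ppower_mem V antiV G_nfg g H sgH nH finH p p_prime Cp.
by move=> x; exists k; apply: mul_cycle_gpow Hk (HG x).
Qed.
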